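(* Let $X$ be a compactum, let $n\geq2$, let $A\in F_n(X)$, and let $f:X\to X$ be a function. Consider the statements: (1) each $x\in A$ is a quasi-periodic point of $f$; (2) $A$ is a quasi-periodic point of $F_n(f)$; (3) $q(A)$ is a quasi-periodic point of $SF_n(f)$. Then (1) implies (2), and (2) implies (3).
   Context: A compactum is a nondegenerate compact, perfect, Hausdorff topological space. $F_n(X)$ is the set of nonempty subsets of $X$ with at most $n$ points, with the Vietoris topology; $F_1(X)=\{\{x\}:x\in X\}$; $F_n(f)(A)=f(A)$. For $n\geq2$, $SF_n(X)=F_n(X)/F_1(X)$ is the quotient collapsing $F_1(X)$ to a point, $q:F_n(X)\to SF_n(X)$ the quotient map, $F_X=q(F_1(X))$, and $SF_n(f)(\chi)=q(F_n(f)(q^{-1}(\chi)))$ for $\chi\neq F_X$, $SF_n(f)(F_X)=F_X$. A point $x$ is a quasi-periodic point of $g:Z\to Z$ if for every open $U\ni x$ there is $m\in\mathbb{N}$ with $g^{km}(x)\in U$ for all integers $k\geq0$. *)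

From mathcomp Require Import all_boot all_order.
From mathcomp Require Import all_classical all_reals all_analysis.
Set Implicit Arguments. Unset Strict Implicit. Unset Printing Implicit Defensive.
Local Open Scope classical_set_scope.

Definition compactum (X : topologicalType) : Prop :=
  [/\ compact [set: X], hausdorff_space X, perfect_set [set: X]
    & exists x y : X, x <> y].

Definition quasi_periodic {Z : Type} (opn : set Z -> Prop) (g : Z -> Z) (x : Z) : Prop :=
  forall U : set Z, opn U -> U x ->
    exists2 m : nat, (0 < m)%N & forall k : nat, U (iter (k * m) g x).

Section Hyperspaces.
Variable X : topologicalType.

Definition Fn (n : nat) : set (set X) :=
  [set A | A !=set0 /\ exists s : seq X, (size s <= n)%N /\ A = [set x | x \in s]].

Definition F1 : set (set X) := [set A | exists x : X, A = [set x]].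

Definition vietoris_basic (Us : seq (set X)) : set (set X) :=
  [set B | B `<=` \bigcup_(U in [set U | U \in Us]) U /\
           forall U, U \in Us -> B `&` U !=set0].

Definition Fn_open (n : nat) (W : set (set X)) : Prop :=
  W `<=` Fn n /\
  forall A, W A -> exists Us : seq (set X),
    (forall U, U \in Us -> open U) /\ vietoris_basic Us A /\
    Fn n `&` vietoris_basic Us `<=` W.

Definition Fn_map (f : X -> X) (A : set X) : set X := f @` A.

(* Quotient map q : F_n(X) -> SF_n(X) = F_n(X)/F_1(X); points of SF_n(X)
   are the equivalence classes: F_X = F_1(X), and {A} for A not in F_1(X). *)
Definition q (A : set X) : set (set X) :=
  if `[< F1 A >] then F1 else [set A].

Definition F_X : set (set X) := F1.

Definition SFn (n : nat) : set (set (set X)) := q @` Fn n.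

Definition SFn_open (n : nat) (V : set (set (set X))) : Prop :=
  V `<=` SFn n /\ Fn_open n (Fn n `&` q @^-1` V).

(* SF_n(f)(chi) = q(F_n(f)(q^-1(chi))) for chi <> F_X, and SF_n(f)(F_X) = F_X.
   For chi <> F_X in SF_n(X), q^-1(chi) is the single point A with chi = {A}. *)
Definition SFn_map (f : X -> X) (chi : set (set X)) : set (set X) :=
  if `[< chi = F_X >] then F_X
  else \bigcup_(A in chi) q (Fn_map f A).

End Hyperspaces.

From mathcomp Require Import all_boot all_order.
From mathcomp Require Import all_classical all_reals all_analysis.
Local Open Scope classical_set_scope.
Set Implicit Arguments. Unset Strict Implicit.

(* A Vietoris neighbourhood of a finite set A is given by finitely many open
   sets U, and f^j(A) lies in it as soon as f^j(x) is in U for every x in A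
   and every listed U containing x.  These are finitely many quasi-periodicity
   conditions, each holding along the multiples of some positive period, so
   all of them hold along the multiples of the product of the periods.  For
   SF_n, the quotient map q is continuous and intertwines F_n(f) with SF_n(f),
   and quasi-periodicity passes along such semiconjugacies. *)

Lemma common_period (T : eqType) (R : T -> nat -> Prop) (s : seq T) :
  {in s, forall i, exists2 m, (0 < m)%N & forall k, R i (k * m)} ->
  exists2 m, (0 < m)%N & forall i k, i \in s -> R i (k * m).
Proof.
elim: s => [|i s IH] periodic; first by exists 1%N.
have [m1 m1_gt0 Rs] : exists2 m, (0 < m)%N & forall j k, j \in s -> R j (k * m).
  by apply: IH => j js; apply: periodic; rewrite inE js orbT.
have [m2 m2_gt0 Ri] := periodic i (mem_head i s).
exists (m1 * m2)%N; first by rewrite muln_gt0 m1_gt0.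
move=> j k; rewrite inE => /predU1P [-> | js].
  by rewrite mulnA; apply: Ri.
by rewrite (mulnC m1) mulnA; apply: Rs.
Qed.

Lemma iter_morph (A B : Type) (h : A -> B) (g : A -> A) (g' : B -> B) :
  {morph h : x / g x >-> g' x} ->
  forall j, {morph h : x / iter j g x >-> iter j g' x}.
Proof. by move=> hg; elim=> [|j IH] x //=; rewrite hg IH. Qed.

Lemma quasi_periodic_semiconj (Z Z' : Type) (opn : set Z -> Prop)
    (opn' : set Z' -> Prop) (g : Z -> Z) (g' : Z' -> Z') (h : Z -> Z') (x : Z) :
  {morph h : y / g y >-> g' y} ->
  (forall V, opn' V -> V (h x) -> exists2 U, opn U & U x /\ U `<=` h @^-1` V) ->
  quasi_periodic opn g x -> quasi_periodic opn' g' (h x).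
Proof.
move=> hg h_cont qp V oV Vhx.
have [U oU [Ux UV]] := h_cont V oV Vhx.
have [m m_gt0 ret] := qp U oU Ux.
by exists m => // k; rewrite -(iter_morph hg); apply: UV.
Qed.

Section Hyperspace_maps.
Variable X : topologicalType.

Lemma image_Fn (n : nat) (g : X -> X) (A : set X) : Fn n A -> Fn n (g @` A).
Proof.
case=> A0 [s [size_s EA]]; split; first exact: image_nonempty.
exists (map g s); split; first by rewrite size_map.
rewrite EA; apply/seteqP; split => y.
  by case=> x xs <-; apply: map_f.
by move=> /mapP [x xs ->]; exists x.
Qed.

Lemma vietoris_basic_image (Us : seq (set X)) (g : X -> X) (A : set X) :
  vietoris_basic Us A ->
  (forall x U, A x -> U \in Us -> U x -> U (g x)) ->
  vietoris_basic Us (g @` A).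
Proof.
move=> [A_cover A_meets] g_stays; split.
  move=> _ [x Ax <-]; have [U UUs Ux] := A_cover x Ax.
  by exists U => //; apply: g_stays.
move=> U UUs; have [x [Ax Ux]] := A_meets U UUs.
by exists (g x); split; [exists x | apply: g_stays].
Qed.

Variable f : X -> X.

Lemma iter_Fn_map j (A : set X) : iter j (Fn_map f) A = iter j f @` A.
Proof. by elim: j => [|j IH] /=; rewrite ?image_id // IH /Fn_map image_comp. Qed.

Lemma quasi_periodic_Fn_map (n : nat) (A : set X) :
  Fn n A -> (forall x, A x -> quasi_periodic open f x) ->
  quasi_periodic (Fn_open n) (Fn_map f) A.
Proof.
move=> FnA qpA W [_ W_nbhs] WA.
have [Us [oUs [UsA UsW]]] := W_nbhs A WA.
case: (FnA) => _ [s [_ EA]].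
pose returns (p : X * set X) j := p.2 p.1 -> p.2 (iter j f p.1).
have [m m_gt0 ret] : exists2 m, (0 < m)%N &
    forall p k, p \in [seq (x, U) | x <- s, U <- Us] -> returns p (k * m).
  apply: common_period => _ /allpairsP [[x U] [/= xs UUs ->]].
  have [Ux | nUx] := pselect (U x); last by exists 1%N => // k /nUx.
  have Ax : A x by rewrite EA.
  have [m m_gt0 retU] := qpA x Ax U (oUs U UUs) Ux.
  by exists m => // k _; apply: retU.
exists m => // k; rewrite iter_Fn_map; apply: UsW; split; first exact: image_Fn.
apply: vietoris_basic_image UsA _ => x U Ax UUs Ux.
by apply: (ret (x, U)) => //; apply: allpairs_f => //; move: Ax; rewrite EA.
Qed.

Lemma SFn_map_q : {morph q (X:=X) : A / Fn_map f A >-> SFn_map f A}.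
Proof.
move=> A; rewrite {2}/q /SFn_map; case: (asboolP (F1 A)) => [[x ->] | nF1A].
  have F1fx : F1 (Fn_map f [set x]) by exists (f x); rewrite /Fn_map image_set1.
  by rewrite /q asboolT // asboolT.
rewrite asboolF ?bigcup_set1 // /F_X => F1_eq.
by apply: nF1A; rewrite -F1_eq.
Qed.

End Hyperspace_maps.

Theorem theorem6 (X : topologicalType) (hX : compactum X) (n : nat) (hn : (2 <= n)%N)
  (A : set X) (hA : Fn n A) (f : X -> X) :
  ((forall x, A x -> quasi_periodic open f x) ->
     quasi_periodic (Fn_open n) (Fn_map f) A) /\
  (quasi_periodic (Fn_open n) (Fn_map f) A ->
     quasi_periodic (SFn_open n) (SFn_map f) (q A)).
Proof.
split; first exact: quasi_periodic_Fn_map.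
apply: quasi_periodic_semiconj (SFn_map_q f) _ => V [_ oV] VqA.
by exists (Fn n `&` q (X:=X) @^-1` V).
Qed.
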